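(* Let $n,m$ be positive integers, $\lambda=(\lambda_1,\dots,\lambda_n)\in\mathcal{P}^m_n$, and let $k_{i,j}=k_{i,j}(\lambda)$ be defined recursively by $$k_{i,j}=\min\left\{m,\left\lceil\frac{\lambda_i-\sum_{\ell=j+1}^n k_{i,\ell}+\sum_{\ell=i+1}^j k_{\ell,j}}{j-i+1}\right\rceil\right\},\quad 1\le i\le j\le n.$$ Then $\lambda_i=\sum_{j=i}^n k_{i,j}$ for every $i\in\{1,\dots,n\}$.
   Context: $\mathcal{P}^m_n$ is the set of integer partitions $(\lambda_1\ge\cdots\ge\lambda_n\ge0)$ with $\lambda_i\le m(n-i+1)$ for all $i$. The recursion is carried out in order of decreasing $i$ and, for fixed $i$, decreasing $j$. *)

From mathcomp Require Import all_boot all_order all_algebra.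
Set Implicit Arguments. Unset Strict Implicit. Unset Printing Implicit Defensive.
Import Order.TTheory GRing.Theory Num.Theory.

(* Partitions are encoded as lam : nat -> nat, with lam i = lambda_i for
   1 <= i <= n (values outside 1..n are irrelevant). *)
Definition in_P (m n : nat) (lam : nat -> nat) : Prop :=
  (forall i, 1 <= i < n -> lam i.+1 <= lam i)%N /\
  (forall i, 1 <= i <= n -> lam i <= m * (n - i + 1))%N.

Local Open Scope ring_scope.

Definition k_rec (m n : nat) (lam : nat -> nat) (k : nat -> nat -> int) : Prop :=
  forall i j : nat, (1 <= i)%N -> (i <= j)%N -> (j <= n)%N ->
    k i j = Order.min (m%:Z)
      (Num.ceil (((lam i)%:Z - \sum_(j.+1 <= l < n.+1) k i l
                   + \sum_(i.+1 <= l < j.+1) k l j)%:~R / ((j - i + 1)%:R) : rat)).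

From mathcomp Require Import all_boot all_order all_algebra.
From mathcomp Require Import zify.
Import Order.TTheory GRing.Theory Num.Theory.
Local Open Scope ring_scope.

(* Rows are treated from the bottom up.  For row i let R_j = lam_i - sum_{l>j} k_{i,l}
   be the part of lam_i not yet used by the columns right of j.  Since the entries
   k_{l,j} (l > i) of the lower rows are nonnegative, a downward induction on j shows
   R_j <= m (j - i + 1); comparing with the same quantity R'_j of row i+1 and using
   lam_{i+1} <= lam_i shows 0 <= R'_j <= R_j.  Hence every k_{i,j} is nonnegative,
   and at j = i the recursion reads k_{i,i} = min(m, R_i) = R_i, i.e. lam_i is the
   row sum. *)

Definition capped_ceil_div (m : nat) (x : int) (d : nat) : int :=
  Order.min m%:Z (Num.ceil (x%:~R / d%:R : rat)).

Lemma ceil_divz_le (x z : int) (d : nat) : (0 < d)%N ->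
  (Num.ceil (x%:~R / d%:R : rat) <= z) = (x <= z * d%:Z).
Proof.
move=> d_gt0; rewrite ceil_le_int ler_pdivrMr ?ltr0n //.
by rewrite -[d%:R]/((d%:Z)%:~R : rat) -intrM ler_int.
Qed.

Lemma le_ceil_divz (x : int) (d : nat) : (0 < d)%N ->
  x <= Num.ceil (x%:~R / d%:R : rat) * d%:Z.
Proof. by move=> d_gt0; rewrite -ceil_divz_le. Qed.

Lemma capped_ceil_div_ge0 (m : nat) (x : int) (d : nat) :
  0 <= x -> 0 <= capped_ceil_div m x d.
Proof.
move=> x_ge0; rewrite le_min /= -(ceil0 rat) le_ceil //.
by rewrite divr_ge0 ?ler0n ?ler0z.
Qed.

Lemma capped_ceil_div1 (m : nat) (x : int) :
  x <= m -> capped_ceil_div m x 1 = x.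
Proof. by move=> x_le; rewrite /capped_ceil_div divr1 intrKceil min_r. Qed.

Lemma sub_capped_ceil_div_le (m D : nat) (R C : int) :
  0 <= C -> R <= m%:Z * D.+1%:Z -> R - capped_ceil_div m (R + C) D.+1 <= m%:Z * D%:Z.
Proof.
move=> C_ge0 R_le; have := le_ceil_divz (R + C) D.+1 (ltn0Sn D).
rewrite /capped_ceil_div; set c := Num.ceil _ => le_c.
case: (lerP m%:Z c) => m_c; nia.
Qed.

Lemma capped_ceil_div_step (m D : nat) (R R' C b : int) : R' <= R ->
  b = capped_ceil_div m (R' + C) D.+1 ->
  capped_ceil_div m (R + b + C) D.+2 <= b + (R - R').
Proof.
move=> le_R'R ->; have := le_ceil_divz (R' + C) D.+1 (ltn0Sn D).
rewrite /capped_ceil_div; set c := Num.ceil _ => le_c.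
rewrite ge_min; apply/orP; case: (lerP m%:Z c) => m_c.
  by left; lia.
by right; rewrite ceil_divz_le //; nia.
Qed.

Lemma down_ind (P : nat -> Prop) (lo hi : nat) : P hi ->
  (forall j, (lo <= j < hi)%N -> P j.+1 -> P j) ->
  forall j, (lo <= j <= hi)%N -> P j.
Proof.
move=> P_hi P_step j; move Ed: (hi - j)%N => d.
elim: d j Ed => [|d IH] j Ed /andP[lo_j j_hi].
  by have -> : j = hi by lia.
by apply: P_step; [lia | apply: IH; lia].
Qed.

Section Rows.

Variables (n m : nat) (lam : nat -> nat) (k : nat -> nat -> int).
Hypothesis lam_P : in_P m n lam.
Hypothesis k_E : k_rec m n lam k.

Definition resid i j : int := (lam i)%:Z - \sum_(j.+1 <= l < n.+1) k i l.
Definition colsum i j : int := \sum_(i.+1 <= l < j.+1) k l j.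

Definition row_ok i : Prop :=
  (lam i)%:Z = \sum_(i <= j < n.+1) k i j /\
  forall j, (i <= j <= n)%N -> 0 <= k i j.

Lemma k_capped_ceil_div i j : (1 <= i)%N -> (i <= j <= n)%N ->
  k i j = capped_ceil_div m (resid i j + colsum i j) (j - i + 1).
Proof. by move=> i_ge1 /andP[i_j j_n]; apply: k_E. Qed.

Lemma resid_n i : resid i n = lam i.
Proof. by rewrite /resid big_geq ?subr0. Qed.

Lemma residS i j : (j < n)%N -> resid i j = resid i j.+1 - k i j.+1.
Proof. by move=> j_n; rewrite /resid big_ltn // opprD addrA addrAC. Qed.

Lemma colsumS i j : (i < j)%N -> colsum i j = k i.+1 j + colsum i.+1 j.
Proof. by move=> i_j; rewrite /colsum big_ltn. Qed.

Variable i : nat.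
Hypotheses (i_ge1 : (1 <= i)%N) (i_le_n : (i <= n)%N).
Hypothesis lower_rows_ok : forall i', (i < i' <= n)%N -> row_ok i'.

Lemma colsum_ge0 j : (j <= n)%N -> 0 <= colsum i j.
Proof.
move=> j_n; rewrite /colsum big_nat_cond; apply: sumr_ge0 => l.
rewrite andbT => /andP[i_l l_j].
have [_ k_ge0] : row_ok l by apply: lower_rows_ok; lia.
by apply: k_ge0; lia.
Qed.

Lemma resid_le j : (i <= j <= n)%N -> resid i j <= m%:Z * (j - i + 1)%:Z.
Proof.
move: j; apply: (down_ind (fun j => resid i j <= m%:Z * (j - i + 1)%:Z)).
  rewrite resid_n -PoszM lez_nat; case: lam_P => _ -> //.
  by rewrite i_ge1 i_le_n.
move=> j /andP[i_j j_n] IH; rewrite residS // k_capped_ceil_div ?i_ge1 //; last by rewrite ltnW.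
rewrite (_ : (j.+1 - i + 1 = (j - i + 1).+1)%N) in IH *; last by lia.
exact: sub_capped_ceil_div_le (colsum_ge0 j.+1 j_n) IH.
Qed.

(* This is where the monotonicity of [lam] enters. *)
Lemma resid_succ_le j : (i < n)%N -> (i <= j <= n)%N -> resid i.+1 j <= resid i j.
Proof.
move=> i_n; move: j; apply: (down_ind (fun j => resid i.+1 j <= resid i j)).
  rewrite !resid_n lez_nat; case: lam_P => -> //.
  by rewrite i_ge1 i_n.
move=> j /andP[i_j j_n] IH; rewrite (residS i.+1 j j_n) (residS i j j_n).
have k_i'j' := k_capped_ceil_div i.+1 j.+1 (ltnW i_ge1) (introT andP (conj i_j j_n)).
rewrite (_ : (j.+1 - i.+1 + 1 = (j - i).+1)%N) in k_i'j'; last by lia.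
rewrite (k_capped_ceil_div i j.+1) //; last by lia.
rewrite colsumS // addrA.
rewrite (_ : (j.+1 - i + 1 = (j - i).+2)%N); last by lia.
have := capped_ceil_div_step _ _ _ _ _ _ IH k_i'j'.
by move: (capped_ceil_div _ _ _) => a; lia.
Qed.

Lemma resid_ge0 j : (i <= j <= n)%N -> 0 <= resid i j.
Proof.
move=> /andP[i_j j_n]; have [i_n | n_le_i] := ltnP i n; last first.
  have -> : j = n by lia.
  by rewrite resid_n.
apply: le_trans (resid_succ_le j i_n _); last by rewrite i_j.
have [lam_sum k_ge0] := lower_rows_ok i.+1 (introT andP (conj (ltnSn i) i_n)).
rewrite /resid lam_sum (@big_cat_nat _ _ _ j.+1) //= addrK.
rewrite big_nat_cond; apply: sumr_ge0 => l /andP[/andP[? ?] _].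
by apply: k_ge0; lia.
Qed.

Lemma row_ok_of_lower : row_ok i.
Proof.
split=> [|j /andP[i_j j_n]]; last first.
  rewrite (k_capped_ceil_div i j i_ge1) ?i_j //; apply: capped_ceil_div_ge0.
  by rewrite addr_ge0 ?resid_ge0 ?colsum_ge0 ?i_j.
rewrite big_ltn ?ltnS // (k_capped_ceil_div i i i_ge1) ?leqnn ?i_le_n //.
rewrite [colsum i i]big_geq // addr0 subnn add0n capped_ceil_div1.
  by rewrite /resid subrK.
by have := resid_le i; rewrite leqnn i_le_n subnn add0n mulr1; apply.
Qed.

End Rows.

Theorem corollary4p4 (n m : nat) (lam : nat -> nat) (k : nat -> nat -> int) :
  (0 < n)%N -> (0 < m)%N -> in_P m n lam -> k_rec m n lam k ->
  forall i : nat, (1 <= i <= n)%N ->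
    (lam i)%:Z = \sum_(i <= j < n.+1) k i j.
Proof.
move=> _ _ lam_P k_E.
have rows_ok i : (1 <= i <= n.+1)%N -> forall i', (i <= i' <= n)%N -> row_ok n lam k i'.
  move: i; apply: (down_ind (fun i => forall i', (i <= i' <= n)%N -> row_ok n lam k i')).
    by move=> i'; lia.
  move=> i /andP[i_ge1 i_n] lower i' /andP[i_i' i'_n].
  case: (ltnP i i') => [lt_i_i' | le_i'_i]; first by apply: lower; rewrite lt_i_i'.
  have -> : i' = i by lia.
  exact: row_ok_of_lower lam_P k_E i i_ge1 i_n lower.
move=> i /andP[i_ge1 i_n].
by have [] := rows_ok i _ i _; rewrite ?i_ge1 ?leqnn ?i_n ?(leqW i_n).
Qed.
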